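(* There is a two-dimensional interpretation $\Gamma$ of the structure $(\mathbb{Z}^{+},\leq,\mid\,)$ that is uniform in the class of all rings $R[x]$ with $R$ a field of positive characteristic and $x$ a single indeterminate. Consequently, arithmetic $(\mathbb{Z},+,\times)$ is uniformly interpretable in this class of rings.
   Context: An $n$-dimensional interpretation $\Gamma$ of an $\mathcal{L}'$-structure $\mathfrak{M}'$ (domain $M'$) in an $\mathcal{L}$-structure $\mathfrak{M}$ (domain $M$) consists of: an $\mathcal{L}$-formula $\partial_\Gamma$ in $n$ variables defining $\Delta_\Gamma\subseteq M^n$; a surjection $F_\Gamma:\Delta_\Gamma\to M'$; an $\mathcal{L}$-formula $=_\Gamma$ in $2n$ variables such that for $\bm a,\bm b\in\Delta_\Gamma$, $\mathfrak{M}\models\bm a=_\Gamma\bm b$ iff $F_\Gamma(\bm a)=F_\Gamma(\bm b)$; for each $m$-ary relation symbol $Q$ of $\mathcal{L}'$ an $mn$-variable $\mathcal{L}$-formula $Q_\Gamma$ with $\mathfrak{M}\models Q_\Gamma(\bm a_1,\dots,\bm a_m)$ iff $\mathfrak{M}'\models Q(F_\Gamma(\bm a_1),\dots,F_\Gamma(\bm a_m))$; for each $m$-ary function symbol $G$ (constants if $m=0$) an $(m+1)n$-variable $\mathcal{L}$-formula $G_\Gamma$ with $\mathfrak{M}\models G_\Gamma(\bm a_1,\dots,\bm a_m,\bm b)$ iff $G(F_\Gamma(\bm a_1),\dots,F_\Gamma(\bm a_m))=F_\Gamma(\bm b)$ in $\mathfrak{M}'$. The interpretation is uniform in a class $\mathcal{H}$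 of $\mathcal{L}$-structures if the formulas $\partial_\Gamma$, $=_\Gamma$, $Q_\Gamma$, $G_\Gamma$ are the same for every $\mathfrak{M}\in\mathcal{H}$ (the coordinate map may depend on $\mathfrak{M}$). Here $\mathcal{L}$ is the language of rings $(+,\times)$; arithmetic means $(\mathbb{Z},+,\times)$. *)

From HB Require Import structures.
From mathcomp Require Import all_boot all_order all_algebra.
Set Implicit Arguments. Unset Strict Implicit. Unset Printing Implicit Defensive.
Import GRing.Theory.
Local Open Scope ring_scope.

Inductive rterm : Type :=
  | RVar of nat
  | RAdd of rterm & rterm
  | RMul of rterm & rterm.

Inductive rform : Type :=
  | REq of rterm & rterm
  | RNot of rform
  | RAnd of rform & rform
  | ROr of rform & rform
  | RImp of rform & rform
  | REx of nat & rform
  | RAll of nat & rform.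

Fixpoint teval (R : pzRingType) (e : nat -> R) (t : rterm) : R :=
  match t with
  | RVar i => e i
  | RAdd t1 t2 => teval e t1 + teval e t2
  | RMul t1 t2 => teval e t1 * teval e t2
  end.

Definition upd (R : Type) (e : nat -> R) (i : nat) (r : R) : nat -> R :=
  fun j => if j == i then r else e j.

Fixpoint sat (R : pzRingType) (e : nat -> R) (f : rform) : Prop :=
  match f with
  | REq t1 t2 => teval e t1 = teval e t2
  | RNot g => ~ sat e g
  | RAnd g h => sat e g /\ sat e h
  | ROr g h => sat e g \/ sat e h
  | RImp g h => sat e g -> sat e h
  | REx i g => exists r : R, sat (upd e i r) g
  | RAll i g => forall r : R, sat (upd e i r) g
  end.

(* M |= phi(a_0, ..., a_{k-1}) : variable i is assigned the i-th entry of s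
   (variables beyond the list get the value 0). *)
Definition holds (R : pzRingType) (f : rform) (s : seq R) : Prop :=
  sat (fun i => nth 0 s i) f.

Definition pos_char (R : fieldType) : Prop := exists p : nat, p \in [pchar R].

(* A 2-dimensional interpretation of (Z^+, <=, |) in M given by formulas
   dom (2 vars), eqf (4 vars), le (4 vars), dv (4 vars), with coordinate map F
   (only its values on the domain Delta matter; positive integers as nats > 0). *)
Definition interp2_Zpos_le_dvd (M : pzRingType) (dom eqf le dv : rform)
    (F : M -> M -> nat) : Prop :=
  [/\ (forall a1 a2, holds dom [:: a1; a2] -> (0 < F a1 a2)%N),
      (forall n : nat, (0 < n)%N -> exists a1 a2, holds dom [:: a1; a2] /\ F a1 a2 = n),
      (forall a1 a2 b1 b2, holds dom [:: a1; a2] -> holds dom [:: b1; b2] ->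
          (holds eqf [:: a1; a2; b1; b2] <-> F a1 a2 = F b1 b2)),
      (forall a1 a2 b1 b2, holds dom [:: a1; a2] -> holds dom [:: b1; b2] ->
          (holds le [:: a1; a2; b1; b2] <-> (F a1 a2 <= F b1 b2)%N)) &
      (forall a1 a2 b1 b2, holds dom [:: a1; a2] -> holds dom [:: b1; b2] ->
          (holds dv [:: a1; a2; b1; b2] <-> (F a1 a2 %| F b1 b2)%N))].

Definition interp_arith (M : pzRingType) (n : nat) (dom eqf add mul : rform)
    (F : seq M -> int) : Prop :=
  let D a := size a = n /\ holds dom a in
  [/\ (forall z : int, exists a, D a /\ F a = z),
      (forall a b, D a -> D b -> (holds eqf (a ++ b) <-> F a = F b)),
      (forall a b c, D a -> D b -> D c ->
          (holds add (a ++ b ++ c) <-> F a + F b = F c)) &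
      (forall a b c, D a -> D b -> D c ->
          (holds mul (a ++ b ++ c) <-> F a * F b = F c))].

From mathcomp Require Import all_boot all_order all_algebra.
From mathcomp Require Import zify ring.
Set Implicit Arguments. Unset Strict Implicit. Unset Printing Implicit Defensive.
Import GRing.Theory.

(* A positive integer e is coded by a pair (t, t ^+ p ^ e) with t of degree
   one.  In R[x] the following are first-order definable (with 1 as the only
   left unit): the units and constants, the polynomials t of degree one
   (every g is congruent to a constant mod t), the powers of such a t (the
   nonunit divisors are multiples of t, and t - 1 divides f - 1), and among
   them the powers t ^+ p ^ e (f + 1 is moreover a power of t + 1, which
   only happens for p-power exponents).  Comparing degrees and
   divisibilities of such powers then defines =, <=, | and the congruence
   relation Cong on the coded exponents. *)

(* A renaming [s] is
   applied to free and bound variables alike; it is sound as soon as no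
   other variable is sent onto the image of a bound variable. *)
Fixpoint tren (s : nat -> nat) (t : rterm) : rterm :=
  match t with
  | RVar i => RVar (s i)
  | RAdd a b => RAdd (tren s a) (tren s b)
  | RMul a b => RMul (tren s a) (tren s b)
  end.

Fixpoint rren (s : nat -> nat) (f : rform) : rform :=
  match f with
  | REq a b => REq (tren s a) (tren s b)
  | RNot g => RNot (rren s g)
  | RAnd g h => RAnd (rren s g) (rren s h)
  | ROr g h => ROr (rren s g) (rren s h)
  | RImp g h => RImp (rren s g) (rren s h)
  | REx i g => REx (s i) (rren s g)
  | RAll i g => RAll (s i) (rren s g)
  end.

Fixpoint rbv (f : rform) : seq nat :=
  match f with
  | REq _ _ => [::]
  | RNot g => rbv g
  | RAnd g h | ROr g h | RImp g h => rbv g ++ rbv h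
  | REx i g | RAll i g => i :: rbv g
  end.

Lemma teval_ren (R : pzRingType) (s : nat -> nat) (e e' : nat -> R) (t : rterm) :
  (forall x, e (s x) = e' x) -> teval e (tren s t) = teval e' t.
Proof. by move=> ee'; elim: t => [x|a IHa b IHb|a IHa b IHb] //=; rewrite IHa IHb. Qed.

Lemma upd_ren (T : Type) (s : nat -> nat) (e e' : nat -> T) (i : nat) (r : T) :
  (forall x, s x = s i -> x = i) -> (forall x, e (s x) = e' x) ->
  forall x, upd e (s i) r (s x) = upd e' i r x.
Proof.
move=> inj_i ee' x; rewrite /upd.
case: (eqVneq x i) => [->|nxi]; first by rewrite eqxx.
by case: eqVneq => [/inj_i/eqP|_]; [rewrite (negbTE nxi) | exact: ee'].
Qed.

(* [s] is injective at each variable of [bv]: the hypothesis making a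
   renaming sound for a formula whose bound variables are [bv]. *)
Definition inj_at (s : nat -> nat) (bv : seq nat) :=
  forall b x, b \in bv -> s x = s b -> x = b.

Lemma inj_at_catl s bv bv' : inj_at s (bv ++ bv') -> inj_at s bv.
Proof. by move=> inj b x hb; apply: inj; rewrite mem_cat hb. Qed.

Lemma inj_at_catr s bv bv' : inj_at s (bv ++ bv') -> inj_at s bv'.
Proof. by move=> inj b x hb; apply: inj; rewrite mem_cat hb orbT. Qed.

Lemma inj_at_behead s i bv : inj_at s (i :: bv) -> inj_at s bv.
Proof. by move=> inj b x hb; apply: inj; rewrite inE hb orbT. Qed.

Lemma inj_at_head s i bv : inj_at s (i :: bv) -> forall x, s x = s i -> x = i.
Proof. by move=> inj x; apply: inj; rewrite mem_head. Qed.

Lemma sat_ren (R : pzRingType) (s : nat -> nat) (f : rform) :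
  inj_at s (rbv f) -> forall e e' : nat -> R, (forall x, e (s x) = e' x) ->
  (sat e (rren s f) <-> sat e' f).
Proof.
elim: f => [a b|g IH|g IHg h IHh|g IHg h IHh|g IHg h IHh|i g IH|i g IH] /= inj e e' ee'.
- by rewrite !(teval_ren _ ee').
- by rewrite (IH inj e e').
- by rewrite (IHg (inj_at_catl inj) e e') // (IHh (inj_at_catr inj) e e').
- by rewrite (IHg (inj_at_catl inj) e e') // (IHh (inj_at_catr inj) e e').
- by rewrite (IHg (inj_at_catl inj) e e') // (IHh (inj_at_catr inj) e e').
- have upd_ee' r := upd_ren r (inj_at_head inj) ee'.
  by split=> -[r Hr]; exists r; move: Hr; rewrite (IH (inj_at_behead inj) _ _ (upd_ee' r)).
- have upd_ee' r := upd_ren r (inj_at_head inj) ee'.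
  by split=> Hr r; move: (Hr r); rewrite (IH (inj_at_behead inj) _ _ (upd_ee' r)).
Qed.

Lemma sat_ren_comp (R : pzRingType) (s : nat -> nat) (f : rform) (e : nat -> R) :
  inj_at s (rbv f) -> (sat e (rren s f) <-> sat (e \o s) f).
Proof. by move=> inj; apply: sat_ren. Qed.

Inductive nform : Type :=
  | NEq of nat & nat
  | NLe of nat & nat
  | NDv of nat & nat
  | NCong of nat & nat & nat
  | NNot of nform
  | NAnd of nform & nform
  | NImp of nform & nform
  | NEx of nat & nform
  | NAll of nat & nform.

Fixpoint nsat (v : nat -> nat) (f : nform) : Prop :=
  match f with
  | NEq i j => v i = v j
  | NLe i j => (v i <= v j)%N
  | NDv i j => (v i %| v j)%N
  | NCong i j k => (v j <= v k)%N /\ (v i %| v k - v j)%N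
  | NNot g => ~ nsat v g
  | NAnd g h => nsat v g /\ nsat v h
  | NImp g h => nsat v g -> nsat v h
  | NEx i g => exists n, (0 < n)%N /\ nsat (upd v i n) g
  | NAll i g => forall n, (0 < n)%N -> nsat (upd v i n) g
  end.

Fixpoint nfv (f : nform) : seq nat :=
  match f with
  | NEq i j | NLe i j | NDv i j => [:: i; j]
  | NCong i j k => [:: i; j; k]
  | NNot g => nfv g
  | NAnd g h | NImp g h => nfv g ++ nfv h
  | NEx i g | NAll i g => [seq x <- nfv g | x != i]
  end.

(* Under a 2-dimensional interpretation, number variable [i] is represented
   by the ring variables [slot i] and [(slot i).+1].  Slots of small variables
   are [0, 1, ..., 11] (so that a list of ring elements can be read as a list
   of pairs), and no slot is congruent to 2 mod 4 beyond that: the ring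
   variables [4 x + 2] with [x >= 6] are reserved for the bound variables of
   the formulas interpreting the atoms. *)
Definition slot (i : nat) : nat := if (i < 6)%N then (2 * i)%N else (4 * i)%N.

Lemma slot_inj i j : slot i = slot j -> i = j.
Proof. by rewrite /slot; case: ifP; case: ifP => ? ? ?; lia. Qed.

Lemma slot_neS i j : slot i <> (slot j).+1.
Proof. by rewrite /slot; case: ifP; case: ifP => ? ? ?; lia. Qed.

Lemma slot_ne_reserved i x : (6 <= x)%N ->
  slot i <> (4 * x + 2)%N /\ (slot i).+1 <> (4 * x + 2)%N.
Proof. by rewrite /slot; case: ifP => ? ?; split; lia. Qed.

(* Instantiation of an atom formula (with free variables 0..5 standing for
   three pairs) at the slots of the number variables [a], [b], [c]. *)
Definition atom_ren (a b c : nat) (x : nat) : nat :=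
  match x with
  | 0 => slot a | 1 => (slot a).+1 | 2 => slot b | 3 => (slot b).+1
  | 4 => slot c | 5 => (slot c).+1
  | _ => (4 * x + 2)%N
  end.

Lemma atom_ren_reserved a b c x : (6 <= x)%N -> atom_ren a b c x = (4 * x + 2)%N.
Proof. by case: x => [|[|[|[|[|[|x]]]]]]. Qed.

Lemma atom_ren_inj a b c (f : rform) :
  all (leq 6) (rbv f) -> inj_at (atom_ren a b c) (rbv f).
Proof.
move=> /allP high x y /high x6; rewrite (atom_ren_reserved _ _ _ x6).
case: (leqP 6 y) => [y6|]; first by rewrite atom_ren_reserved //; lia.
have [na nSa] := slot_ne_reserved a x6; have [nb nSb] := slot_ne_reserved b x6.
have [nc nSc] := slot_ne_reserved c x6.
by case: y => [|[|[|[|[|[|y]]]]]].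
Qed.

Section Translation.
Variables (domR eqR leR dvR congR : rform).

Fixpoint tr (f : nform) : rform :=
  match f with
  | NEq i j => rren (atom_ren i j i) eqR
  | NLe i j => rren (atom_ren i j i) leR
  | NDv i j => rren (atom_ren i j i) dvR
  | NCong i j k => rren (atom_ren i j k) congR
  | NNot g => RNot (tr g)
  | NAnd g h => RAnd (tr g) (tr h)
  | NImp g h => RImp (tr g) (tr h)
  | NEx i g => REx (slot i) (REx (slot i).+1
                 (RAnd (rren (atom_ren i i i) domR) (tr g)))
  | NAll i g => RAll (slot i) (RAll (slot i).+1
                 (RImp (rren (atom_ren i i i) domR) (tr g)))
  end.

Variables (M : pzRingType) (F : M -> M -> nat) (Dom : M -> M -> Prop).
Hypotheses (F_pos : forall a b, Dom a b -> (0 < F a b)%N)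
  (F_onto : forall n, (0 < n)%N -> exists a b, Dom a b /\ F a b = n)
  (domR_spec : forall e : nat -> M, sat e domR <-> Dom (e 0) (e 1))
  (eqR_spec : forall e : nat -> M, Dom (e 0) (e 1) -> Dom (e 2) (e 3) ->
      (sat e eqR <-> F (e 0) (e 1) = F (e 2) (e 3)))
  (leR_spec : forall e : nat -> M, Dom (e 0) (e 1) -> Dom (e 2) (e 3) ->
      (sat e leR <-> (F (e 0) (e 1) <= F (e 2) (e 3))%N))
  (dvR_spec : forall e : nat -> M, Dom (e 0) (e 1) -> Dom (e 2) (e 3) ->
      (sat e dvR <-> (F (e 0) (e 1) %| F (e 2) (e 3))%N))
  (congR_spec : forall e : nat -> M, Dom (e 0) (e 1) -> Dom (e 2) (e 3) ->
      Dom (e 4) (e 5) ->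
      (sat e congR <-> (F (e 2) (e 3) <= F (e 4) (e 5))%N /\
                       (F (e 0) (e 1) %| F (e 4) (e 5) - F (e 2) (e 3))%N))
  (domR_bv : all (leq 6) (rbv domR)) (eqR_bv : all (leq 6) (rbv eqR))
  (leR_bv : all (leq 6) (rbv leR)) (dvR_bv : all (leq 6) (rbv dvR))
  (congR_bv : all (leq 6) (rbv congR)).

Definition pair_at (e : nat -> M) (x : nat) := (e (slot x), e (slot x).+1).

Definition represents (e : nat -> M) (v : nat -> nat) (fv : seq nat) :=
  (forall x, x \in fv -> Dom (pair_at e x).1 (pair_at e x).2) /\
  (forall x, F (pair_at e x).1 (pair_at e x).2 = v x).

Lemma represents_sub e v fv fv' :
  {subset fv' <= fv} -> represents e v fv -> represents e v fv'.
Proof. by move=> sub [D Fv]; split=> // x /sub /D. Qed.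

Definition upd_pair (e : nat -> M) (i : nat) (r1 r2 : M) :=
  upd (upd e (slot i) r1) (slot i).+1 r2.

Lemma pair_at_upd e i r1 r2 x :
  pair_at (upd_pair e i r1 r2) x = if x == i then (r1, r2) else pair_at e x.
Proof.
rewrite /pair_at /upd_pair /upd.
have neS y z : (slot y == (slot z).+1) = false by apply/eqP/slot_neS.
case: (eqVneq x i) => [->|nxi]; first by rewrite neS !eqxx.
have nslot : (slot x == slot i) = false.
  by apply/eqP => /slot_inj /eqP; rewrite (negbTE nxi).
by rewrite eqSS nslot neS eq_sym neS.
Qed.

Lemma represents_upd e v fv i r1 r2 : Dom r1 r2 ->
  represents e v [seq x <- fv | x != i] ->
  represents (upd_pair e i r1 r2) (upd v i (F r1 r2)) fv.
Proof.
move=> Dr [Dfv Fv]; split=> x; rewrite pair_at_upd.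
  by case: eqVneq => [//|nxi xfv]; apply: Dfv; rewrite mem_filter nxi.
by rewrite /upd; case: eqVneq.
Qed.

Lemma sat_dom_upd e i r1 r2 :
  sat (upd_pair e i r1 r2) (rren (atom_ren i i i) domR) <-> Dom r1 r2.
Proof.
rewrite (sat_ren_comp _ (atom_ren_inj domR_bv)) domR_spec /=.
by have := pair_at_upd e i r1 r2 i; rewrite eqxx /pair_at => -[-> ->].
Qed.

Lemma sat_atom (a b c : nat) (A : rform) (rel : nat -> nat -> nat -> Prop) :
  all (leq 6) (rbv A) ->
  (forall e : nat -> M, Dom (e 0) (e 1) -> Dom (e 2) (e 3) -> Dom (e 4) (e 5) ->
     (sat e A <-> rel (F (e 0) (e 1)) (F (e 2) (e 3)) (F (e 4) (e 5)))) ->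
  forall e v, represents e v [:: a; b; c] ->
  (sat e (rren (atom_ren a b c) A) <-> rel (v a) (v b) (v c)).
Proof.
move=> A_bv A_spec e v [Dabc Fv].
rewrite (sat_ren_comp _ (atom_ren_inj A_bv)).
by rewrite A_spec /= ?Fv //; apply: Dabc; rewrite !inE eqxx ?orbT.
Qed.

(* Binary atoms are instantiated as ternary ones, repeating the first
   argument. *)
Lemma represents_binary e v i j :
  represents e v [:: i; j] -> represents e v [:: i; j; i].
Proof.
by apply: represents_sub => x; rewrite !inE; case/or3P=> ->; rewrite ?orbT.
Qed.

Lemma tr_sat (f : nform) : forall (e : nat -> M) (v : nat -> nat),
  represents e v (nfv f) -> (sat e (tr f) <-> nsat v f).
Proof.
elim: f => [i j|i j|i j|i j k|g IH|g IHg h IHh|g IHg h IHh|i g IH|i g IH] e v rep /=.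
- have rep3 := represents_binary rep.
  apply: (sat_atom eqR_bv _ rep3 (rel := fun x y _ => x = y)) => e' D0 D2 _.
  exact: eqR_spec.
- have rep3 := represents_binary rep.
  apply: (sat_atom leR_bv _ rep3 (rel := fun x y _ => x <= y)%N) => e' D0 D2 _.
  exact: leR_spec.
- have rep3 := represents_binary rep.
  apply: (sat_atom dvR_bv _ rep3 (rel := fun x y _ => x %| y)%N) => e' D0 D2 _.
  exact: dvR_spec.
- exact: (sat_atom congR_bv congR_spec rep
    (rel := fun x y z => (y <= z)%N /\ (x %| z - y)%N)).
- by rewrite (IH e v rep).
- rewrite (IHg e v) ?(IHh e v) //; apply: represents_sub rep => x hx;
    by rewrite mem_cat hx ?orbT.
- rewrite (IHg e v) ?(IHh e v) //; apply: represents_sub rep => x hx;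
    by rewrite mem_cat hx ?orbT.
- split=> [[r1 [r2 [/sat_dom_upd Dr Hg]]] | [n [n0 Hg]]].
    exists (F r1 r2); split; first exact: F_pos.
    by rewrite -(IH _ _ (represents_upd Dr rep)).
  have [r1 [r2 [Dr Fr]]] := F_onto n0; exists r1, r2; split; first exact/sat_dom_upd.
  by rewrite (IH _ _ (represents_upd Dr rep)) Fr.
- split=> [Hg n n0 | Hg r1 r2 /sat_dom_upd Dr].
    have [r1 [r2 [Dr <-]]] := F_onto n0.
    by rewrite -(IH _ _ (represents_upd Dr rep)); apply: Hg; apply/sat_dom_upd.
  by rewrite (IH _ _ (represents_upd Dr rep)); apply: Hg; apply: F_pos.
Qed.

End Translation.

Ltac upd_simpl :=
  rewrite /upd;
  repeat match goal with
  | |- context [(?x == ?y :> nat)] =>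
      first [ have -> : (x == y) = false by lia | have -> : (x == y) = true by lia ]
  end; cbv iota.

(* Definable relations in (Z^+, <=, |, Cong).  In each formula below the
   parameter [N] exceeds every free variable; the variables from [N] on are
   used as bound variables. *)
Definition NLt i j := NNot (NLe j i).

(* [v i + v j = v k]: [v i < v k] and the divisors of [v j] are exactly
   the [d] with [v k = v i (mod d)]. *)
Definition AddF N i j k :=
  NAnd (NLt i k) (NAll N (NAnd (NImp (NCong N i k) (NDv N j)) (NImp (NDv N j) (NCong N i k)))).

Lemma AddP N i j k v : (i < N)%N -> (j < N)%N -> (k < N)%N -> (0 < v j)%N ->
  nsat v (AddF N i j k) <-> (v i + v j = v k)%N.
Proof.
move=> hi hj hk pj /=; split.
  move=> [/negP]; rewrite -ltnNge => lt H.
  have [_ d1] := H (v j) pj; have [d2 _] := H (v k - v i)%N ltac:(lia).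
  move: d1 d2; upd_simpl => d1 d2.
  have [_ dv_j] := d1 (dvdnn _).
  have dv_k : (v k - v i %| v j)%N by apply: d2; split; [lia | exact: dvdnn].
  suff : v j = (v k - v i)%N by lia.
  by apply/eqP; rewrite eqn_dvd dv_j dv_k.
move=> E; split; first by apply/negP; rewrite -ltnNge; lia.
move=> d d0; upd_simpl.
have -> : (v k - v i = v j)%N by lia.
by split=> [[]//|h]; split=> //; lia.
Qed.

Definition SuccF N i s :=
  NAnd (NLt i s) (NAll N (NImp (NLt i N) (NLe s N))).

Lemma SuccP N i s v : (i < N)%N -> (s < N)%N ->
  nsat v (SuccF N i s) <-> (v s = (v i).+1)%N.
Proof.
move=> hi hs /=; split.
  move=> [/negP]; rewrite -ltnNge => lt H.
  have := H (v i).+1 ltac:(lia); upd_simpl => H1.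
  suff : (v s <= (v i).+1)%N by lia.
  by apply: H1; apply/negP; rewrite -ltnNge; lia.
move=> E; split; first by apply/negP; rewrite -ltnNge; lia.
by move=> n n0; upd_simpl => /negP; rewrite -ltnNge; lia.
Qed.

Definition LcmF N i j l :=
  NAnd (NDv i l) (NAnd (NDv j l) (NAll N (NImp (NAnd (NDv i N) (NDv j N)) (NDv l N)))).

Lemma LcmP N i j l v : (i < N)%N -> (j < N)%N -> (l < N)%N ->
  (0 < v i)%N -> (0 < v j)%N ->
  nsat v (LcmF N i j l) <-> v l = lcmn (v i) (v j).
Proof.
move=> hi hj hl pi pj /=; split.
  move=> [d1 [d2 H]].
  have := H (lcmn (v i) (v j)); upd_simpl => H1.
  have d3 : (v l %| lcmn (v i) (v j))%N.
    apply: H1; first by rewrite lcmn_gt0 pi pj.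
    by split; [apply: dvdn_lcml | apply: dvdn_lcmr].
  by apply/eqP; rewrite eqn_dvd d3 dvdn_lcm d1 d2.
move=> E; rewrite E; split; first exact: dvdn_lcml.
split; first exact: dvdn_lcmr.
by move=> n n0; upd_simpl => -[d1 d2]; rewrite E dvdn_lcm d1 d2.
Qed.

Arguments AddF : simpl never.
Arguments SuccF : simpl never.
Arguments LcmF : simpl never.
Arguments NLt : simpl never.

(* Consecutive numbers are coprime, which is what makes squaring definable. *)
Lemma lcmnS n : lcmn n n.+1 = (n * n.+1)%N.
Proof. by rewrite /lcmn (eqP (coprimenS _)) divn1. Qed.

(* [v k = v i ^ 2], via [v i ^ 2 + v i = lcm (v i) (v i + 1)]. *)
Definition SqF N i k :=
  NEx N (NEx N.+1 (NAnd (SuccF N.+2 i N) (NAnd (LcmF N.+2 i N N.+1) (AddF N.+2 k i N.+1)))).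

Lemma SqP N i k v : (i < N)%N -> (k < N)%N -> (0 < v i)%N ->
  nsat v (SqF N i k) <-> (v k = v i * v i)%N.
Proof.
move=> hi hk pi; rewrite /SqF; cbn [nsat]; split.
  move=> [a [a0 [b [b0 [H1 [H2 H3]]]]]].
  move: H1; rewrite SuccP; try lia; upd_simpl => H1.
  move: H2; rewrite LcmP; try lia; upd_simpl; try lia; move=> H2.
  move: H3; rewrite AddP; try lia; upd_simpl; try lia; move=> H3.
  rewrite H1 lcmnS in H2; nia.
move=> E; exists (v i).+1; split => //; exists (v i * (v i).+1)%N; split; first by nia.
rewrite SuccP; try lia; upd_simpl; split => //.
rewrite LcmP; try lia; upd_simpl; try lia; split; first by rewrite lcmnS.
rewrite AddP; try lia; upd_simpl; nia.
Qed.
Arguments SqF : simpl never.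

(* [v k = v i * v j], via [2 v k + v i ^ 2 + v j ^ 2 = (v i + v j) ^ 2]. *)
Definition MulF N i j k :=
  NEx N (NEx N.+1 (NEx N.+2 (NEx N.+3 (NEx N.+4 (NEx (N+5) (
    NAnd (SqF (N+6) i N) (NAnd (SqF (N+6) j N.+1) (NAnd (AddF (N+6) i j N.+2)
    (NAnd (SqF (N+6) N.+2 N.+3) (NAnd (AddF (N+6) k k N.+4)
    (NAnd (AddF (N+6) N.+4 N (N+5)) (AddF (N+6) (N+5) N.+1 N.+3)))))))))))).

Lemma MulP N i j k v : (i < N)%N -> (j < N)%N -> (k < N)%N ->
  (0 < v i)%N -> (0 < v j)%N -> (0 < v k)%N ->
  nsat v (MulF N i j k) <-> (v k = v i * v j)%N.
Proof.
move=> hi hj hk pi pj pk; rewrite /MulF; cbn [nsat]; split.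
  move=> [a [a0 [b [b0 [c [c0 [d [d0 [f [f0 [g [g0 [H1 [H2 [H3 [H4 [H5 [H6 H7]]]]]]]]]]]]]]]]]].
  move: H1; rewrite SqP; try lia; upd_simpl; try lia; move=> H1.
  move: H2; rewrite SqP; try lia; upd_simpl; try lia; move=> H2.
  move: H3; rewrite AddP; try lia; upd_simpl; try lia; move=> H3.
  move: H4; rewrite SqP; try lia; upd_simpl; try lia; move=> H4.
  move: H5; rewrite AddP; try lia; upd_simpl; try lia; move=> H5.
  move: H6; rewrite AddP; try lia; upd_simpl; try lia; move=> H6.
  move: H7; rewrite AddP; try lia; upd_simpl; try lia; move=> H7.
move=> E.
exists (v i * v i)%N; split; first by nia.
exists (v j * v j)%N; split; first by nia.
exists (v i + v j)%N; split; first by nia.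
exists ((v i + v j) * (v i + v j))%N; split; first by nia.
exists (v k + v k)%N; split; first by nia.
exists (v k + v k + v i * v i)%N; split; first by nia.
rewrite SqP; try lia; upd_simpl; try lia; split => //.
rewrite SqP; try lia; upd_simpl; try lia; split => //.
rewrite AddP; try lia; upd_simpl; try lia; split => //.
rewrite SqP; try lia; upd_simpl; try lia; split => //.
rewrite AddP; try lia; upd_simpl; try lia; split => //.
rewrite AddP; try lia; upd_simpl; try lia; split => //.
rewrite AddP; try lia; upd_simpl; try lia; nia.
Qed.
Arguments MulF : simpl never.

(* Arithmetic on integers represented as differences [v 0 - v 1],
   [v 2 - v 3], [v 4 - v 5] of positive integers. *)

Definition ZEqF := NEx 6 (NAnd (AddF 10 0 3 6) (AddF 10 1 2 6)).

Lemma ZEqP v : (0 < v 0)%N -> (0 < v 1)%N -> (0 < v 2)%N -> (0 < v 3)%N ->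
  nsat v ZEqF <-> (v 0 + v 3 = v 1 + v 2)%N.
Proof.
move=> p0 p1 p2 p3; rewrite /ZEqF; cbn [nsat]; split.
  move=> [a [a0 [H1 H2]]].
  move: H1; rewrite AddP; try lia; upd_simpl; try lia; move=> H1.
  move: H2; rewrite AddP; try lia; upd_simpl; try lia.
move=> E; exists (v 0 + v 3)%N; split; first lia.
rewrite !AddP; try lia; upd_simpl; lia.
Qed.

Definition ZAddF := NEx 6 (NEx 7 (NEx 8 (NAnd (AddF 10 0 2 6) (NAnd (AddF 10 6 5 8)
  (NAnd (AddF 10 1 3 7) (AddF 10 7 4 8)))))).

Lemma ZAddP v : (0 < v 0)%N -> (0 < v 1)%N -> (0 < v 2)%N -> (0 < v 3)%N ->
  (0 < v 4)%N -> (0 < v 5)%N ->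
  nsat v ZAddF <-> (v 0 + v 2 + v 5 = v 1 + v 3 + v 4)%N.
Proof.
move=> p0 p1 p2 p3 p4 p5; rewrite /ZAddF; cbn [nsat]; split.
  move=> [a [a0 [b [b0 [c [c0 [H1 [H2 [H3 H4]]]]]]]]].
  move: H1; rewrite AddP; try lia; upd_simpl; try lia; move=> H1.
  move: H2; rewrite AddP; try lia; upd_simpl; try lia; move=> H2.
  move: H3; rewrite AddP; try lia; upd_simpl; try lia; move=> H3.
  move: H4; rewrite AddP; try lia; upd_simpl; try lia.
move=> E; exists (v 0 + v 2)%N; split; first lia.
exists (v 1 + v 3)%N; split; first lia.
exists (v 0 + v 2 + v 5)%N; split; first lia.
rewrite !AddP; try lia; upd_simpl; lia.
Qed.

Definition ZMulF := NEx 6 (NEx 7 (NEx 8 (NEx 9 (NEx 10 (NEx 11 (NEx 12 (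
  NAnd (MulF 20 0 2 6) (NAnd (MulF 20 1 3 7) (NAnd (MulF 20 0 3 8) (NAnd (MulF 20 1 2 9)
  (NAnd (AddF 20 6 7 10) (NAnd (AddF 20 10 5 12) (NAnd (AddF 20 8 9 11) (AddF 20 11 4 12)))))))))))))).

Lemma ZMulP v : (0 < v 0)%N -> (0 < v 1)%N -> (0 < v 2)%N -> (0 < v 3)%N ->
  (0 < v 4)%N -> (0 < v 5)%N ->
  nsat v ZMulF <-> (v 0 * v 2 + v 1 * v 3 + v 5 = v 0 * v 3 + v 1 * v 2 + v 4)%N.
Proof.
move=> p0 p1 p2 p3 p4 p5; rewrite /ZMulF; cbn [nsat]; split.
  move=> [a [a0 [b [b0 [c [c0 [d [d0 [f [f0 [g [g0 [h [h0 [H1 [H2 [H3 [H4 [H5 [H6 [H7 H8]]]]]]]]]]]]]]]]]]]]].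
  move: H1; rewrite MulP; try lia; upd_simpl; try lia; move=> H1.
  move: H2; rewrite MulP; try lia; upd_simpl; try lia; move=> H2.
  move: H3; rewrite MulP; try lia; upd_simpl; try lia; move=> H3.
  move: H4; rewrite MulP; try lia; upd_simpl; try lia; move=> H4.
  move: H5; rewrite AddP; try lia; upd_simpl; try lia; move=> H5.
  move: H6; rewrite AddP; try lia; upd_simpl; try lia; move=> H6.
  move: H7; rewrite AddP; try lia; upd_simpl; try lia; move=> H7.
  move: H8; rewrite AddP; try lia; upd_simpl; try lia; move=> H8.
move=> E.
exists (v 0 * v 2)%N; split; first nia.
exists (v 1 * v 3)%N; split; first nia.
exists (v 0 * v 3)%N; split; first nia.
exists (v 1 * v 2)%N; split; first nia.
exists (v 0 * v 2 + v 1 * v 3)%N; split; first nia.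
exists (v 0 * v 3 + v 1 * v 2)%N; split; first nia.
exists (v 0 * v 2 + v 1 * v 3 + v 5)%N; split; first nia.
rewrite !MulP; try lia; upd_simpl; try nia.
rewrite !AddP; try lia; upd_simpl; try nia.
Qed.

Local Open Scope ring_scope.

(* The ring-theoretic properties used by the interpretation, stated relative
   to an element [o] which the formulas bind to the unit of the ring.  In
   R[x], for [t] of degree one and [e], [a], [b], [c], [m] naturals:
   - [IsPPower 1 t f] says that [f = t ^+ p ^ e] for some [e];
   - [SameDeg 1 (t ^+ p ^ a) (s ^+ p ^ b)] says that [a = b];
   - [LeRel], [DvRel] and [CongRel] express [<=], [|] and [Cong] on the
     exponents [e] of the powers [t ^+ p ^ e]. *)
Section RingPredicates.
Variables (M : pzRingType) (o : M).
Definition IsUnit (u : M) := exists v, u * v = o.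
Definition IsZero (u : M) := u + u = u.
Definition IsConst (u : M) := IsZero u \/ IsUnit u.
Definition Divides (a b : M) := exists w, b = a * w.
Definition IsLinear (t : M) :=
  ~ IsUnit t /\ ~ IsZero t /\ forall g, exists c, IsConst c /\ exists w, t * w + c = g.
Definition IsPower (t f : M) :=
  (forall g, Divides g f /\ ~ IsUnit g -> Divides t g) /\ exists w, t * w + o = f + w.
Definition IsPPower (t f : M) := IsPower t f /\ IsPower (t + o) (f + o).
Definition InDom (t f : M) := IsLinear t /\ IsPPower t f /\ ~ f = t.
Definition SameDeg (f g : M) := exists c, IsUnit c /\ exists d, IsConst d /\ g = c * f + d.
Definition LeRel (t f g : M) := exists h, IsPPower t h /\ SameDeg h g /\ Divides f h.
Definition DvRel (t f g : M) :=
  exists h, IsPPower t h /\ SameDeg h g /\ exists w, h + t * w = t + f * w.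
Definition CongRel (t f1 f2 f3 : M) :=
  exists v, IsPPower t v /\ SameDeg v f2 /\ exists w, IsPPower t w /\ SameDeg w f3 /\
  exists u, w = v * u /\ exists k, f1 * k + t = t * u + t * k.
End RingPredicates.

(* The same properties as ring formulas; variable 6 holds the unit and the
   [b]'s are the bound variables used. *)
Definition fUnit (T : rterm) b := REx b (REq (RMul T (RVar b)) (RVar 6)).
Definition fZero T := REq (RAdd T T) T.
Definition fConst T b := ROr (fZero T) (fUnit T b).
Definition fDvd A B b := REx b (REq B (RMul A (RVar b))).
Definition fLinear T b1 b2 b3 := RAnd (RNot (fUnit T b1)) (RAnd (RNot (fZero T))
  (RAll b1 (REx b2 (RAnd (fConst (RVar b2) b3)
    (REx b3 (REq (RAdd (RMul T (RVar b3)) (RVar b2)) (RVar b1))))))).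
Definition fPower T F b1 b2 :=
  RAnd (RAll b1 (RImp (RAnd (fDvd (RVar b1) F b2) (RNot (fUnit (RVar b1) b2)))
                      (fDvd T (RVar b1) b2)))
       (REx b1 (REq (RAdd (RMul T (RVar b1)) (RVar 6)) (RAdd F (RVar b1)))).
Definition fPPower T F b1 b2 :=
  RAnd (fPower T F b1 b2) (fPower (RAdd T (RVar 6)) (RAdd F (RVar 6)) b1 b2).
Definition fSameDeg F G b1 b2 b3 := REx b1 (RAnd (fUnit (RVar b1) b2)
  (REx b2 (RAnd (fConst (RVar b2) b3) (REq G (RAdd (RMul (RVar b1) F) (RVar b2)))))).
Definition withOne body :=
  REx 6 (RAnd (RAll 7 (REq (RMul (RVar 6) (RVar 7)) (RVar 7))) body).

Definition domR := withOne (RAnd (fLinear (RVar 0) 8 9 10)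
  (RAnd (fPPower (RVar 0) (RVar 1) 8 9) (RNot (REq (RVar 1) (RVar 0))))).
Definition eqR := withOne (fSameDeg (RVar 1) (RVar 3) 8 9 10).
Definition leR := withOne (REx 11 (RAnd (fPPower (RVar 0) (RVar 11) 8 9)
  (RAnd (fSameDeg (RVar 11) (RVar 3) 8 9 10) (fDvd (RVar 1) (RVar 11) 8)))).
Definition dvR := withOne (REx 11 (RAnd (fPPower (RVar 0) (RVar 11) 8 9)
  (RAnd (fSameDeg (RVar 11) (RVar 3) 8 9 10)
  (REx 8 (REq (RAdd (RVar 11) (RMul (RVar 0) (RVar 8)))
              (RAdd (RVar 0) (RMul (RVar 1) (RVar 8)))))))).
Definition congR := withOne (REx 11 (RAnd (fPPower (RVar 0) (RVar 11) 8 9)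
  (RAnd (fSameDeg (RVar 11) (RVar 3) 8 9 10)
  (REx 12 (RAnd (fPPower (RVar 0) (RVar 12) 8 9) (RAnd (fSameDeg (RVar 12) (RVar 5) 8 9 10)
  (REx 13 (RAnd (REq (RVar 12) (RMul (RVar 11) (RVar 13)))
  (REx 8 (REq (RAdd (RMul (RVar 1) (RVar 8)) (RVar 0))
              (RAdd (RMul (RVar 0) (RVar 13)) (RMul (RVar 0) (RVar 8))))))))))))).

Lemma atoms_bv : [/\ all (leq 6) (rbv domR), all (leq 6) (rbv eqR),
  all (leq 6) (rbv leR), all (leq 6) (rbv dvR) & all (leq 6) (rbv congR)].
Proof. by []. Qed.

Section Semantics.
Variable M : pzRingType.
Implicit Types e : nat -> M.

Lemma left_unit_one (P : M -> Prop) : (exists o, (forall z, o * z = z) /\ P o) <-> P 1.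
Proof.
split=> [[o [o1 Po]] | P1]; last by exists 1; split=> //; exact: mul1r.
by have <- : o = 1 by rewrite -[o]mulr1 o1.
Qed.

Lemma domR_sat e : sat e domR <-> InDom 1 (e 0) (e 1).
Proof. exact: (left_unit_one (fun o => InDom o _ _)). Qed.
Lemma eqR_sat e : sat e eqR <-> SameDeg 1 (e 1) (e 3).
Proof. exact: (left_unit_one (fun o => SameDeg o _ _)). Qed.
Lemma leR_sat e : sat e leR <-> LeRel 1 (e 0) (e 1) (e 3).
Proof. exact: (left_unit_one (fun o => LeRel o _ _ _)). Qed.
Lemma dvR_sat e : sat e dvR <-> DvRel 1 (e 0) (e 1) (e 3).
Proof. exact: (left_unit_one (fun o => DvRel o _ _ _)). Qed.
Lemma congR_sat e : sat e congR <-> CongRel 1 (e 0) (e 1) (e 3) (e 5).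
Proof. exact: (left_unit_one (fun o => CongRel o _ _ _ _)). Qed.
End Semantics.

Section PolynomialPredicates.
Variable R : fieldType.
Local Notation P := {poly R}.
Implicit Types t f g u : P.

Lemma unitP1 u : IsUnit 1 u <-> size u = 1%N.
Proof.
rewrite /IsUnit; split; first by move/unitrPr; rewrite poly_unitE => /andP[/eqP].
move=> su; apply/unitrPr; rewrite poly_unitE su eqxx /= unitfE.
have <- : lead_coef u = u`_0 by rewrite lead_coefE su.
by rewrite lead_coef_eq0 -size_poly_eq0 su.
Qed.

Lemma zeroP u : IsZero u <-> u = 0.
Proof.
by rewrite /IsZero; split=> [H|->]; [apply: (addrI u); rewrite addr0 | rewrite addr0].
Qed.

Lemma constP1 u : IsConst 1 u <-> (size u <= 1)%N.
Proof.
rewrite /IsConst zeroP unitP1; split; first by case=> [->|->]; rewrite ?size_poly0.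
by rewrite leq_eqVlt ltnS leqn0 size_poly_eq0 => /orP[/eqP|/eqP]; [right|left].
Qed.

Lemma size_lin_exp t n : size t = 2%N -> size (t ^+ n) = n.+1.
Proof.
move=> st; have t0 : t != 0 by rewrite -size_poly_eq0 st.
have := size_exp t n; rewrite st mul1n => E.
by rewrite -[in RHS]E prednK // size_poly_gt0 expf_neq0.
Qed.

Lemma size_linD1 t : size t = 2%N -> size (t + 1) = 2%N.
Proof. by move=> st; rewrite size_polyDl // size_poly1 st. Qed.

Lemma size_linB1 t : size t = 2%N -> size (t - 1) = 2%N.
Proof. by move=> st; rewrite size_polyDl // size_polyN size_poly1 st. Qed.

Definition lroot t := - t`_0 / t`_1.

Lemma lin_coef1 t : size t = 2%N -> t`_1 != 0.
Proof.
move=> st; have <- : lead_coef t = t`_1 by rewrite lead_coefE st.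
by rewrite lead_coef_eq0 -size_poly_eq0 st.
Qed.

Lemma lin_factor t : size t = 2%N -> t = (t`_1)%:P * ('X - (lroot t)%:P).
Proof.
move=> st; have t1 := lin_coef1 st.
apply/polyP => i; rewrite coefCM coefB coefX coefC /lroot.
case: i => [|[|i]] /=; [by field | by rewrite subr0 mulr1 |].
by rewrite subr0 mulr0 nth_default // st.
Qed.

Lemma lin_eqp t : size t = 2%N -> t %= 'X - (lroot t)%:P.
Proof. by move=> st; rewrite {1}(lin_factor st) mul_polyC eqp_scale ?lin_coef1. Qed.

Lemma root_lroot t : size t = 2%N -> root t (lroot t).
Proof. by move=> st; rewrite /root {1}(lin_factor st) hornerM hornerXsubC subrr mulr0. Qed.

Lemma dvd_linP t g : size t = 2%N -> (Divides t g <-> root g (lroot t)).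
Proof.
move=> st; split; first by move=> [w ->]; rewrite rootM root_lroot.
move/factor_theorem => [q ->]; exists (q * (t`_1)^-1%:P).
move: (lin_factor st) (lin_coef1 st); set c := t`_1; set r := lroot t => -> c0.
have -> : c%:P * ('X - r%:P) * (q * c^-1%:P) = (c%:P * c^-1%:P) * (q * ('X - r%:P)).
  by ring.
by rewrite -polyCM mulfV // mul1r.
Qed.

(* A divisor of a power of [t] not vanishing at the root of [t] is a
   constant: it is coprime to [t], hence to the power it divides. *)
Lemma dvd_lin_exp_const t n g w :
  size t = 2%N -> g * w = t ^+ n -> ~~ root g (lroot t) -> size g = 1%N.
Proof.
move=> st gw ng; apply/eqP; rewrite -coprimepp.
apply: (@coprimep_dvdl _ (t ^+ n)); first by rewrite -gw dvdp_mulr.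
by apply: coprimep_expr; rewrite (eqp_coprimepr _ (lin_eqp st)) coprimep_XsubC.
Qed.

Lemma lin_polyP t : IsLinear 1 t <-> size t = 2%N.
Proof.
split=> [[nU [nZ mod_const]] | st].
  have t1 : size t <> 1%N by move/unitP1.
  have t0 : t != 0 by apply/eqP => /zeroP.
  have [c [/constP1 sc [w E]]] := mod_const 'X.
  have w0 : w != 0.
    by apply/eqP => w0; move: sc; rewrite -(addKr (t * w) c) E w0 mulr0 oppr0 add0r size_polyX.
  have : size (t * w) = 2%N.
    by rewrite -(addrK c (t * w)) E (size1_polyC sc) size_XsubC.
  rewrite size_mul //; move: t1 t0 w0; rewrite -!size_poly_eq0.
  by move: (size t) (size w) => x y; lia.
split; first by move/unitP1; rewrite st.
split; first by move/zeroP => t0; move: st; rewrite t0 size_poly0.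
move=> g; exists (g %% t); split; last by exists (g %/ t); rewrite mulrC -divp_eq.
by apply/constP1; rewrite -ltnS -st ltn_modp -size_poly_eq0 st.
Qed.

Lemma eq_iff_sub (V : zmodType) (a b c d : V) : a - b = c - d -> (a = b <-> c = d).
Proof.
by move=> E; split=> H; apply/eqP; rewrite -subr_eq0; [rewrite -E | rewrite E]; rewrite H subrr.
Qed.

Lemma power_congr t f w : t * w + 1 = f + w <-> (t - 1) * w = f - 1.
Proof. by apply: eq_iff_sub; ring. Qed.

Lemma power_exp t n : size t = 2%N -> IsPower 1 t (t ^+ n).
Proof.
move=> st; split.
  move=> g [[w gw] nU]; apply/dvd_linP => //; apply/negPn/negP => ng.
  by apply: nU; apply/unitP1; exact: (dvd_lin_exp_const st (esym gw) ng).
have := subrXX t 1 n; rewrite expr1n => E.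
by eexists; apply/power_congr; exact: (esym E).
Qed.

(* A constant power of [t] is [1]: otherwise [t - 1] would divide a
   nonzero constant. *)
Lemma power_const t f : size t = 2%N -> IsPower 1 t f -> (size f <= 1)%N -> f = 1.
Proof.
move=> st [_ [w /power_congr E]] sf; case: (eqVneq w 0) => [w0|w0].
  by apply/eqP; rewrite -subr_eq0 -E w0 mulr0.
have : (size (f - 1)%R <= 1)%N by rewrite (size1_polyC sf) -polyCB size_polyC_leq1.
have t1 : t - 1 != 0 by rewrite -size_poly_eq0 size_linB1.
rewrite -E size_mul // size_linB1 // => sw; exfalso.
by move: sw w0; rewrite -size_poly_eq0; move: (size w) => n; lia.
Qed.

Lemma power_step t f f' : IsPower 1 t f -> f = t * f' -> IsPower 1 t f'.
Proof.
move=> [dvd_f [w /power_congr E]] ff'; split.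
  by move=> g [[v fv] nU]; apply: dvd_f; split=> //; exists (t * v); rewrite ff' fv mulrCA.
exists (w - f'); apply/power_congr.
by rewrite mulrBr E ff'; ring.
Qed.

Lemma powerP t f : size t = 2%N -> (IsPower 1 t f <-> exists n, f = t ^+ n).
Proof.
move=> st; split=> [|[n ->]]; last exact: power_exp.
elim: {f}(size f) {-2}f (leqnn (size f)) => [|N IH] f sf pf.
  by exists 0%N; rewrite (power_const st pf) ?(leq_trans sf).
have [sf1|sf1] := leqP (size f) 1; first by exists 0%N; rewrite (power_const st pf).
have [f' ff'] : Divides t f.
  apply: pf.1; split; first by exists 1; rewrite mulr1.
  by move/unitP1 => f1; move: sf1; rewrite f1.
have f'0 : f' != 0 by apply: contraTneq sf1 => f'0; rewrite ff' f'0 mulr0 size_poly0.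
have [k f'k] : exists k, f' = t ^+ k.
  have t0 : t != 0 by rewrite -size_poly_eq0 st.
  apply: IH (power_step pf ff'); move: sf.
  by rewrite ff' size_mul // st add2n => sf'; exact: sf'.
by exists k.+1; rewrite ff' f'k exprS.
Qed.

End PolynomialPredicates.

Lemma dvdn_exp_sub1 q c k : (1 < q)%N -> (0 < c)%N ->
  (q ^ c - 1 %| q ^ k - 1)%N = (c %| k)%N.
Proof.
move=> q1 c0; have qc : (1 < q ^ c)%N by rewrite -{1}(expn0 q) ltn_exp2l.
elim/ltn_ind: k => k IH; case: (ltnP k c) => kc.
  case: k IH kc => [|k] IH kc; first by rewrite expn0 subnn !dvdn0.
  have -> : (c %| k.+1)%N = false by apply/negP => /dvdn_leq; lia.
  apply/negP => /dvdn_leq; have : (q ^ k.+1 < q ^ c)%N by rewrite ltn_exp2l.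
  have : (1 < q ^ k.+1)%N by rewrite -{1}(expn0 q) ltn_exp2l.
  lia.
have E : (q ^ k - 1 = q ^ (k - c) * (q ^ c - 1) + (q ^ (k - c) - 1))%N.
  have : (0 < q ^ (k - c))%N by rewrite expn_gt0; lia.
  have -> : (q ^ k = q ^ (k - c) * q ^ c)%N by rewrite -expnD subnK.
  by move: qc; move: (q ^ (k - c))%N (q ^ c)%N => x y; nia.
rewrite E dvdn_addr ?dvdn_mull // IH; last by lia.
by rewrite -{2}(subnK kc) dvdn_addl.
Qed.

Lemma dvdn_exp_subexp q c a m : (1 < q)%N -> (0 < c)%N -> (a <= m)%N ->
  (q ^ c - 1 %| q ^ m - q ^ a)%N = (c %| m - a)%N.
Proof.
move=> q1 c0 am.
have -> : (q ^ m - q ^ a = q ^ a * (q ^ (m - a) - 1))%N.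
  by rewrite mulnBr muln1 -expnD subnKC.
rewrite Gauss_dvdr ?dvdn_exp_sub1 //; apply: coprimeXr.
apply: (@coprime_dvdr _ (q ^ c)); first by rewrite -(prednK c0) expnS dvdn_mulr.
have qc : (0 < q ^ c)%N by rewrite expn_gt0; lia.
by rewrite -[X in coprime _ X](subnK qc) addn1 coprimenS.
Qed.

Section LinearPowers.
Variable R : fieldType.
Local Notation P := {poly R}.
Implicit Types t f g : P.

Lemma divides_size f g : f != 0 -> Divides g f -> (size g <= size f)%N.
Proof. by move=> f0 [w fgw]; apply: dvdp_leq => //; rewrite fgw dvdp_mulr. Qed.

Lemma size_lin_exp_sub1 t k : size t = 2%N -> (0 < k)%N -> size (t ^+ k - 1) = k.+1.
Proof.
by move=> st k0; rewrite size_polyDl size_lin_exp // size_polyN size_poly1.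
Qed.

(* For [t] of degree one, [t ^+ u - 1] divides [t ^+ m - 1] iff [u] divides
   [m], by Euclidean division of the exponents. *)
Lemma dvd_lin_exp_sub1 t u m : size t = 2%N -> (0 < u)%N ->
  Divides (t ^+ u - 1) (t ^+ m - 1) <-> (u %| m)%N.
Proof.
move=> st u0; elim/ltn_ind: m => m IH; case: (ltnP m u) => mu.
  case: m IH mu => [|m] _ mu.
    by rewrite dvdn0; split=> // _; exists 0; rewrite expr0 subrr mulr0.
  have -> : (u %| m.+1)%N = false by apply/negP => /dvdn_leq; lia.
  split=> // /divides_size; rewrite -size_poly_eq0 !size_lin_exp_sub1 //; lia.
have E : t ^+ m - 1 = t ^+ (m - u) * (t ^+ u - 1) + (t ^+ (m - u) - 1).
  by rewrite mulrBr mulr1 -exprD subnK //; ring.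
have -> : (u %| m)%N = (u %| m - u)%N by rewrite -{1}(subnK mu) dvdn_addl.
rewrite -IH; last by lia.
split=> -[w Ew]; [exists (w - t ^+ (m - u)) | exists (t ^+ (m - u) + w)];
  last by rewrite E Ew; ring.
by apply: (addIr (t ^+ (m - u) * (t ^+ u - 1))); rewrite [LHS]addrC -E Ew; ring.
Qed.

(* The divisibility condition of [DvRel], after cancelling [t]. *)
Lemma lin_exp_subt t U M w : size t = 2%N -> (0 < U)%N -> (0 < M)%N ->
  t ^+ M + t * w = t + t ^+ U * w <-> t ^+ M.-1 - 1 = (t ^+ U.-1 - 1) * w.
Proof.
move=> st U0 M0; have t0 : t != 0 by rewrite -size_poly_eq0 st.
rewrite -(prednK U0) -(prednK M0) !exprS /=.
rewrite (@eq_iff_sub _ _ _ (t * (t ^+ M.-1 - 1)) (t * ((t ^+ U.-1 - 1) * w))).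
  by split=> [/(mulfI t0) | ->].
by ring.
Qed.

(* The congruence condition of [CongRel], after cancelling [t]. *)
Lemma lin_exp_cong t C u k : size t = 2%N -> (0 < C)%N ->
  t ^+ C * k + t = t * u + t * k <-> u - 1 = (t ^+ C.-1 - 1) * k.
Proof.
move=> st C0; have t0 : t != 0 by rewrite -size_poly_eq0 st.
rewrite -(prednK C0) exprS /=.
rewrite (@eq_iff_sub _ _ _ (t * ((t ^+ C.-1 - 1) * k)) (t * (u - 1))).
  by split=> [/(mulfI t0)/esym | ->].
by ring.
Qed.

End LinearPowers.

(* In characteristic [p], the exponents [n] with [(t + 1) ^+ n = t ^+ n + 1]
   are exactly the powers of [p]; this pins down the formulas' meaning. *)
Section Characteristic.
Variables (R : fieldType) (p : nat).
Hypothesis hp : p \in [pchar R].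
Local Notation P := {poly R}.
Implicit Types t f g : P.

Lemma p_gt1 : (1 < p)%N.
Proof. exact/prime_gt1/(pcharf_prime hp). Qed.

Lemma frob_expD (x y : P) e : (x + y) ^+ (p ^ e) = x ^+ (p ^ e) + y ^+ (p ^ e).
Proof.
have hpP : p \in [pchar P] by rewrite pchar_poly.
apply: exprDn_pchar; rewrite pnatX; apply/orP; left.
by rewrite /pnat prime_gt0 ?(pcharf_prime hp) //= primes_prime ?(pcharf_prime hp) //= andbT.
Qed.

Lemma frob_inj (x y : P) : x ^+ p = y ^+ p -> x = y.
Proof.
move=> E; have : (x - y) ^+ p = 0.
  have hpP : p \in [pchar P] by rewrite pchar_poly.
  by rewrite -(pFrobenius_autE hpP) rmorphB /= !(pFrobenius_autE hpP) E subrr.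
by move/eqP; rewrite expf_eq0 subr_eq0 => /andP[_ /eqP].
Qed.

(* For [n] prime to [p], differentiating [(t + 1) ^+ n = t ^+ n + 1] gives
   [(t + 1) ^+ n.-1 = t ^+ n.-1], which forces [n = 1] at the root of [t]. *)
Lemma exp_add1_coprime t n : size t = 2%N -> (0 < n)%N -> ~~ (p %| n)%N ->
  (t + 1) ^+ n = t ^+ n + 1 -> n = 1%N.
Proof.
move=> st n0 pn E.
have nP : (n%:R : P) != 0.
  by rewrite -(rmorph_nat (@polyC R)) polyC_eq0 -(dvdn_pcharf hp).
have dt0 : t^`() != 0.
  apply/eqP => /(congr1 (fun q : P => q`_0)); rewrite coef_deriv coef0 mulr1n.
  by apply/eqP; apply: lin_coef1.
have D := congr1 deriv E.
rewrite !derivD !deriv_exp !derivD -polyC1 derivC !addr0 in D.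
rewrite -(mulr_natr (t^`() * (t + 1) ^+ n.-1)) -(mulr_natr (t^`() * t ^+ n.-1)) in D.
move/(mulIf nP)/(mulfI dt0)/(congr1 (horner^~ (lroot t))): D.
rewrite !horner_exp hornerD hornerC (rootP (root_lroot st)) add0r expr1n expr0n.
by case: eqP => [|_ /eqP]; [lia | rewrite oner_eq0].
Qed.

Lemma exp_add1_ppower t n : size t = 2%N -> (0 < n)%N ->
  (t + 1) ^+ n = t ^+ n + 1 -> exists e, n = (p ^ e)%N.
Proof.
move=> st; elim/ltn_ind: n => n IH n0 E.
case: (boolP (p %| n)%N) => [pn|pn]; last first.
  by exists 0%N; rewrite (exp_add1_coprime st n0 pn E).
have [m nm] : exists m, n = (m * p)%N by exists (n %/ p)%N; rewrite divnK.
have m0 : (0 < m)%N by move: n0; rewrite nm muln_gt0 => /andP[].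
have [e me] : exists e, m = (p ^ e)%N.
  apply: IH => //; first by rewrite nm ltn_Pmulr ?p_gt1.
  apply: frob_inj; rewrite -!exprM -nm E.
  by have := frob_expD (t ^+ m) 1 1; rewrite expn1 expr1n -exprM -nm.
by exists e.+1; rewrite nm me expnSr.
Qed.

Lemma ppowerP t f : size t = 2%N -> (IsPPower 1 t f <-> exists e, f = t ^+ (p ^ e)).
Proof.
move=> st; split=> [|[e ->]]; last first.
  split; first by apply/(powerP _ st); exists (p ^ e)%N.
  by apply/(powerP _ (size_linD1 st)); exists (p ^ e)%N; rewrite frob_expD expr1n.
move=> [/(powerP _ st) [n ->] /(powerP _ (size_linD1 st)) [m Em]].
case: n Em => [|n] Em.
  exfalso; have : (size ((t + 1) ^+ m) <= 1)%N.
    by rewrite -Em expr0 -polyC1 -polyCD size_polyC_leq1.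
  rewrite size_lin_exp ?size_linD1 //; case: m Em => // Em _; move: Em.
  by rewrite expr0 expr0 => /eqP; rewrite -subr_eq0 addrK oner_eq0.
have mn : m = n.+1.
  have := congr1 (fun q : P => size q) Em.
  rewrite (size_lin_exp m (size_linD1 st)) size_polyDl (size_lin_exp _ st) ?size_poly1 //.
  by case.
have [e ->] := exp_add1_ppower st (ltn0Sn n) (esym (etrans Em (congr1 _ mn))).
by exists e.
Qed.

Lemma ppower_gt0 e : (0 < p ^ e)%N.
Proof. by rewrite expn_gt0 ltnW ?p_gt1. Qed.

Lemma ppower_gt1 e : (0 < e)%N -> (1 < p ^ e)%N.
Proof. by move=> e0; rewrite -{1}(expn0 p) ltn_exp2l ?p_gt1. Qed.

Lemma domP t f : InDom 1 t f <-> size t = 2%N /\ exists e, (0 < e)%N /\ f = t ^+ (p ^ e).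
Proof.
split=> [[/lin_polyP st [/(ppowerP _ st) [e fe] nft]] | [st [e [e0 ->]]]].
  split=> //; exists e; split=> //.
  by case: e fe => // fe; exfalso; apply: nft; rewrite fe expn0 expr1.
split; first exact/lin_polyP.
split; first by apply/(ppowerP _ st); exists e.
move/(congr1 (fun q : P => size q)); rewrite /= size_lin_exp // st => -[]; have := ppower_gt1 e0; lia.
Qed.
Lemma samedeg_size f g : (1 < size f)%N -> SameDeg 1 f g -> size g = size f.
Proof.
move=> sf [c [/unitP1 sc [d [/constP1 sd ->]]]].
have c0 : c != 0 by rewrite -size_poly_eq0 sc.
have f0 : f != 0 by rewrite -size_poly_eq0; case: (size f) sf.
by rewrite size_polyDl size_mul // sc //; move: sf sd; move: (size f) (size d) => x y; lia.
Qed.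

(* Linear polynomials are affine images of each other, and [x |-> x ^+ p ^ a]
   is additive: so [t ^+ p ^ a] and [s ^+ p ^ b] are related by [SameDeg]
   iff they have the same size, i.e. iff [a = b]. *)
Lemma samedeg_ppowerP t (s : P) a b : size t = 2%N -> size s = 2%N ->
  SameDeg 1 (t ^+ (p ^ a)) (s ^+ (p ^ b)) <-> a = b.
Proof.
move=> st ss; split=> [|<-].
  move/samedeg_size; rewrite !size_lin_exp // => /(_ (ppower_gt0 a)) [].
  by move/eqP; rewrite eqn_exp2l ?p_gt1 // => /eqP.
pose al := s`_1 / t`_1; pose be := s`_0 - al * t`_0.
have es : s = al%:P * t + be%:P.
  apply/polyP => i; rewrite coefD coefCM coefC.
  case: i => [|[|i]] /=; first by rewrite /be; ring.
    by rewrite addr0 /al divfK ?lin_coef1.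
  by rewrite addr0 !nth_default ?mulr0 // ?ss ?st.
exists (al ^+ (p ^ a))%:P; split.
  by apply/unitP1; rewrite size_polyC expf_neq0 // mulf_neq0 ?invr_eq0 ?lin_coef1.
exists (be ^+ (p ^ a))%:P; split; first by apply/constP1; exact: size_polyC_leq1.
by rewrite es frob_expD exprMn !rmorphXn.
Qed.

(* The relation [<=] on exponents: [t ^+ p ^ a] divides [t ^+ p ^ b]. *)
Lemma lerel_ppowerP t (s : P) a b : size t = 2%N -> size s = 2%N ->
  LeRel 1 t (t ^+ (p ^ a)) (s ^+ (p ^ b)) <-> (a <= b)%N.
Proof.
move=> st ss; have t0 : t != 0 by rewrite -size_poly_eq0 st.
split=> [[h [/(ppowerP _ st) [c ->] [/(samedeg_ppowerP _ _ st ss) -> /divides_size]]] | ab].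
  by rewrite !size_lin_exp // expf_neq0 // ltnS leq_exp2l ?p_gt1 //; apply.
exists (t ^+ (p ^ b)); split; first by apply/(ppowerP _ st); exists b.
split; first exact/(samedeg_ppowerP _ _ st ss).
by exists (t ^+ (p ^ b - p ^ a)); rewrite -exprD subnKC // leq_exp2l ?p_gt1.
Qed.

(* The relation [|] on exponents: [t ^+ p ^ a - t] divides [t ^+ p ^ b - t],
   i.e. [p ^ a - 1] divides [p ^ b - 1], i.e. [a] divides [b]. *)
Lemma dvrel_ppowerP t (s : P) a b : size t = 2%N -> size s = 2%N -> (0 < a)%N ->
  DvRel 1 t (t ^+ (p ^ a)) (s ^+ (p ^ b)) <-> (a %| b)%N.
Proof.
move=> st ss a0.
have key : (exists w, t ^+ (p ^ b) + t * w = t + t ^+ (p ^ a) * w) <-> (a %| b)%N.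
  rewrite -(dvdn_exp_sub1 _ p_gt1 a0) !subn1 -(dvd_lin_exp_sub1 _ st); last first.
    by have := ppower_gt1 a0; lia.
  by split=> -[w Ew]; exists w; move: Ew; rewrite lin_exp_subt ?ppower_gt0.
split=> [[h [/(ppowerP _ st) [c ->] [/(samedeg_ppowerP _ _ st ss) -> Hw]]] | ab].
  exact/key.
exists (t ^+ (p ^ b)); split; first by apply/(ppowerP _ st); exists b.
by split; [exact/(samedeg_ppowerP _ _ st ss) | exact/key].
Qed.

(* The relation [Cong c a m] on exponents: [t ^+ p ^ m = t ^+ p ^ a * u]
   with [t ^+ (p ^ c - 1) - 1] dividing [u - 1 = t ^+ (p ^ m - p ^ a) - 1]. *)
Lemma congrel_ppowerP (t1 t2 t3 : P) c a m : size t1 = 2%N -> size t2 = 2%N ->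
  size t3 = 2%N -> (0 < c)%N ->
  CongRel 1 t1 (t1 ^+ (p ^ c)) (t2 ^+ (p ^ a)) (t3 ^+ (p ^ m)) <->
  (a <= m)%N /\ (c %| m - a)%N.
Proof.
move=> s1 s2 s3 c0; have t0 : t1 != 0 by rewrite -size_poly_eq0 s1.
have pc0 : (0 < (p ^ c).-1)%N by have := ppower_gt1 c0; lia.
have cong_exp (am : (a <= m)%N) : (exists k, t1 ^+ (p ^ c) * k + t1 = t1 * t1 ^+ (p ^ m - p ^ a) + t1 * k)
    <-> (c %| m - a)%N.
  rewrite -(dvdn_exp_subexp p_gt1 c0 am) subn1 -(dvd_lin_exp_sub1 _ s1) //.
  by split=> -[k Ek]; exists k; move: Ek; rewrite lin_exp_cong // ppower_gt0.
split.
  move=> [v [/(ppowerP _ s1) [a' ->] [/(samedeg_ppowerP _ _ s1 s2) ->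
         [w [/(ppowerP _ s1) [m' ->] [/(samedeg_ppowerP _ _ s1 s3) -> [u [wvu Hk]]]]]]]].
  have am : (a <= m)%N.
    have /divides_size : Divides (t1 ^+ (p ^ a)) (t1 ^+ (p ^ m)) by exists u.
    by rewrite !size_lin_exp // expf_neq0 // ltnS leq_exp2l ?p_gt1 //; apply.
  have pam : (p ^ a <= p ^ m)%N by rewrite leq_exp2l ?p_gt1.
  have uE : u = t1 ^+ (p ^ m - p ^ a).
    by apply: (mulfI (expf_neq0 (p ^ a) t0)); rewrite -wvu -exprD subnKC.
  by move: Hk; rewrite uE cong_exp.
move=> [am cma]; have pam : (p ^ a <= p ^ m)%N by rewrite leq_exp2l ?p_gt1.
exists (t1 ^+ (p ^ a)); split; first by apply/(ppowerP _ s1); exists a.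
split; first exact/(samedeg_ppowerP _ _ s1 s2).
exists (t1 ^+ (p ^ m)); split; first by apply/(ppowerP _ s1); exists m.
split; first exact/(samedeg_ppowerP _ _ s1 s3).
exists (t1 ^+ (p ^ m - p ^ a)); split; first by rewrite -exprD subnKC.
exact/cong_exp.
Qed.
End Characteristic.

Section PolynomialInterpretation.
Variables (R : fieldType) (p : nat).
Hypothesis hp : p \in [pchar R].
Local Notation P := {poly R}.

Definition PDom (a b : P) := size a = 2%N /\ exists e, (0 < e)%N /\ b = a ^+ (p ^ e).
Definition pcoord (a b : P) := logn p (size b).-1.

Lemma pcoordE (t : P) e : size t = 2%N -> pcoord t (t ^+ (p ^ e)) = e.
Proof. by move=> st; rewrite /pcoord size_lin_exp // pfactorK ?(pcharf_prime hp). Qed.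

Lemma pcoord_pos a b : PDom a b -> (0 < pcoord a b)%N.
Proof. by move=> [st [e [e0 ->]]]; rewrite pcoordE. Qed.

Lemma pcoord_onto n : (0 < n)%N -> exists a b, PDom a b /\ pcoord a b = n.
Proof.
move=> n0; exists 'X, ('X ^+ (p ^ n)); rewrite pcoordE ?size_polyX //.
by split=> //; split; [exact: size_polyX | exists n].
Qed.

Lemma domR_spec (e : nat -> P) : sat e domR <-> PDom (e 0) (e 1).
Proof. by rewrite domR_sat (domP hp). Qed.

Lemma eqR_spec (e : nat -> P) : PDom (e 0) (e 1) -> PDom (e 2) (e 3) ->
  (sat e eqR <-> pcoord (e 0) (e 1) = pcoord (e 2) (e 3)).
Proof.
move=> [s0 [a [_ E1]]] [s2 [b [_ E3]]].
by rewrite eqR_sat E1 E3 !pcoordE // (samedeg_ppowerP hp).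
Qed.

Lemma leR_spec (e : nat -> P) : PDom (e 0) (e 1) -> PDom (e 2) (e 3) ->
  (sat e leR <-> (pcoord (e 0) (e 1) <= pcoord (e 2) (e 3))%N).
Proof.
move=> [s0 [a [_ E1]]] [s2 [b [_ E3]]].
by rewrite leR_sat E1 E3 !pcoordE // (lerel_ppowerP hp).
Qed.

Lemma dvR_spec (e : nat -> P) : PDom (e 0) (e 1) -> PDom (e 2) (e 3) ->
  (sat e dvR <-> (pcoord (e 0) (e 1) %| pcoord (e 2) (e 3))%N).
Proof.
move=> [s0 [a [a0 E1]]] [s2 [b [_ E3]]].
by rewrite dvR_sat E1 E3 !pcoordE // (dvrel_ppowerP hp).
Qed.

Lemma congR_spec (e : nat -> P) : PDom (e 0) (e 1) -> PDom (e 2) (e 3) ->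
  PDom (e 4) (e 5) ->
  (sat e congR <-> (pcoord (e 2) (e 3) <= pcoord (e 4) (e 5))%N /\
                   (pcoord (e 0) (e 1) %| pcoord (e 4) (e 5) - pcoord (e 2) (e 3))%N).
Proof.
move=> [s0 [c [c0 E1]]] [s2 [a [_ E3]]] [s4 [m [_ E5]]].
by rewrite congR_sat E1 E3 E5 !pcoordE // (congrel_ppowerP hp).
Qed.

Definition trR := tr domR eqR leR dvR congR.

Definition pair_pcoord (a : seq P) (x : nat) :=
  pcoord (nth 0 a (slot x)) (nth 0 a (slot x).+1).

Lemma holds_trR (f : nform) (a : seq P) :
  (forall x, x \in nfv f -> PDom (nth 0 a (slot x)) (nth 0 a (slot x).+1)) ->
  (holds (trR f) a <-> nsat (pair_pcoord a) f).
Proof.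
have [bv_dom bv_eq bv_le bv_dv bv_cong] := atoms_bv.
move=> Da; apply: tr_sat => //.
- exact: pcoord_pos.
- exact: pcoord_onto.
- exact: domR_spec.
- exact: eqR_spec.
- exact: leR_spec.
- exact: dvR_spec.
- exact: congR_spec.
- by split.
Qed.

End PolynomialInterpretation.

(* The domain of the 4-dimensional interpretation of (Z, +, x): two pairs
   of the domain, coding the difference of two positive integers. *)
Definition dom4 := RAnd (rren (atom_ren 0 0 0) domR) (rren (atom_ren 1 1 1) domR).

Lemma nfv_arith : [/\ all (fun i => i < 4)%N (nfv ZEqF), all (fun i => i < 6)%N (nfv ZAddF)
  & all (fun i => i < 6)%N (nfv ZMulF)].
Proof. by split; vm_compute. Qed.

Section Interpretations.
Variables (R : fieldType) (p : nat).
Hypothesis hp : p \in [pchar R].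
Local Notation P := {poly R}.
Local Notation PDom := (PDom p).

Lemma interp_Zpos : interp2_Zpos_le_dvd domR eqR leR dvR (@pcoord R p).
Proof.
have pair_dom (a1 a2 : P) : holds domR [:: a1; a2] <-> PDom a1 a2 by apply: domR_spec.
split=> [a1 a2 /pair_dom | n /(pcoord_onto hp) [a [b [Dab <-]]] | a1 a2 b1 b2 /pair_dom Da /pair_dom Db
        | a1 a2 b1 b2 /pair_dom Da /pair_dom Db | a1 a2 b1 b2 /pair_dom Da /pair_dom Db].
- exact: pcoord_pos.
- by exists a, b; split=> //; apply/pair_dom.
- exact: (eqR_spec hp (e := nth 0 [:: a1; a2; b1; b2])).
- exact: (leR_spec hp (e := nth 0 [:: a1; a2; b1; b2])).
- exact: (dvR_spec hp (e := nth 0 [:: a1; a2; b1; b2])).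
Qed.

Lemma dom4P (a0 a1 a2 a3 : P) :
  holds dom4 [:: a0; a1; a2; a3] <-> PDom a0 a1 /\ PDom a2 a3.
Proof.
have [bv_dom _ _ _ _] := atoms_bv.
rewrite /holds /dom4; cbn [sat]; rewrite !(sat_ren_comp _ (atom_ren_inj bv_dom)).
by rewrite !(domR_spec hp).
Qed.

Lemma dom4_inv (a : seq P) : size a = 4%N /\ holds dom4 a ->
  exists a0 a1 a2 a3, a = [:: a0; a1; a2; a3] /\ PDom a0 a1 /\ PDom a2 a3.
Proof.
case: a => [|a0 [|a1 [|a2 [|a3 [|? ?]]]]] [] // _ /dom4P H.
by exists a0, a1, a2, a3.
Qed.

Definition zcode (a : seq P) : int := (pair_pcoord p a 0)%:Z - (pair_pcoord p a 1)%:Z.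

Lemma zcode_onto z : exists a, (size a = 4%N /\ holds dom4 a) /\ zcode a = z.
Proof.
have [m [n [m0 [n0 ->]]]] : exists m n : nat, (0 < m)%N /\ (0 < n)%N /\ z = m%:Z - n%:Z.
  case: z => k; first by exists k.+1, 1%N; do 2!split=> //; lia.
  by exists 1%N, k.+2; do 2!split=> //; rewrite NegzE; lia.
have [a0 [a1 [Da <-]]] := pcoord_onto hp m0; have [a2 [a3 [Db <-]]] := pcoord_onto hp n0.
by exists [:: a0; a1; a2; a3]; split; first by split=> //; apply/dom4P.
Qed.

Lemma holds_trR_pairs (n : nat) (f : nform) (a : seq P) : (n <= 6)%N ->
  all (fun i => i < n)%N (nfv f) ->
  (forall x, (x < n)%N -> PDom (nth 0 a (2 * x)) (nth 0 a (2 * x).+1)) ->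
  (holds (trR f) a <-> nsat (pair_pcoord p a) f).
Proof.
move=> n6 /allP small Da; apply: (holds_trR hp) => x /small xn.
by have := Da x xn; rewrite /slot (leq_trans xn n6).
Qed.

Lemma interp_Z : interp_arith 4 dom4 (trR ZEqF) (trR ZAddF) (trR ZMulF) zcode.
Proof.
have [nfv_eq nfv_add nfv_mul] := nfv_arith.
split=> [|a b|a b c|a b c]; first exact: zcode_onto.
- move=> /dom4_inv [a0 [a1 [a2 [a3 [-> [Da1 Da2]]]]]].
  move=> /dom4_inv [b0 [b1 [b2 [b3 [-> [Db1 Db2]]]]]].
  rewrite (holds_trR_pairs _ nfv_eq) //; last by case=> [|[|[|[|]]]].
  rewrite ZEqP /zcode /pair_pcoord /slot /=; try exact: (pcoord_pos hp).
  move: (pcoord_pos hp Da1) (pcoord_pos hp Da2) (pcoord_pos hp Db1) (pcoord_pos hp Db2).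
  move: (pcoord p a0 a1) (pcoord p a2 a3) (pcoord p b0 b1) (pcoord p b2 b3) => x y z w *.
  by split=> ?; lia.
- move=> /dom4_inv [a0 [a1 [a2 [a3 [-> [Da1 Da2]]]]]].
  move=> /dom4_inv [b0 [b1 [b2 [b3 [-> [Db1 Db2]]]]]].
  move=> /dom4_inv [c0 [c1 [c2 [c3 [-> [Dc1 Dc2]]]]]].
  rewrite (holds_trR_pairs _ nfv_add) //; last by case=> [|[|[|[|[|[|]]]]]].
  rewrite ZAddP /zcode /pair_pcoord /slot /=; try exact: (pcoord_pos hp).
  move: (pcoord_pos hp Da1) (pcoord_pos hp Da2) (pcoord_pos hp Db1) (pcoord_pos hp Db2).
  move: (pcoord_pos hp Dc1) (pcoord_pos hp Dc2).
  move: (pcoord p a0 a1) (pcoord p a2 a3) (pcoord p b0 b1) (pcoord p b2 b3).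
  move: (pcoord p c0 c1) (pcoord p c2 c3) => x y z w u v *.
  by split=> ?; lia.
- move=> /dom4_inv [a0 [a1 [a2 [a3 [-> [Da1 Da2]]]]]].
  move=> /dom4_inv [b0 [b1 [b2 [b3 [-> [Db1 Db2]]]]]].
  move=> /dom4_inv [c0 [c1 [c2 [c3 [-> [Dc1 Dc2]]]]]].
  rewrite (holds_trR_pairs _ nfv_mul) //; last by case=> [|[|[|[|[|[|]]]]]].
  rewrite ZMulP /zcode /pair_pcoord /slot /=; try exact: (pcoord_pos hp).
  move: (pcoord_pos hp Da1) (pcoord_pos hp Da2) (pcoord_pos hp Db1) (pcoord_pos hp Db2).
  move: (pcoord_pos hp Dc1) (pcoord_pos hp Dc2).
  move: (pcoord p a0 a1) (pcoord p a2 a3) (pcoord p b0 b1) (pcoord p b2 b3).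
  move: (pcoord p c0 c1) (pcoord p c2 c3) => x y z w u v *.
  by split=> ?; nia.
Qed.

End Interpretations.

Theorem theorem2p5 :
  (exists dom eqf le dv : rform,
     forall R : fieldType, pos_char R ->
       exists F : {poly R} -> {poly R} -> nat,
         interp2_Zpos_le_dvd dom eqf le dv F)
  /\
  (exists (n : nat) (dom eqf add mul : rform),
     forall R : fieldType, pos_char R ->
       exists F : seq {poly R} -> int,
         interp_arith n dom eqf add mul F).
Proof.
split.
  exists domR, eqR, leR, dvR => R [p hp]; exists (pcoord p); exact: interp_Zpos.
exists 4%N, dom4, (trR ZEqF), (trR ZAddF), (trR ZMulF) => R [p hp].
by exists (zcode p); exact: interp_Z.
Qed.
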